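(* Let $I$ and ${\cal Q}_I$ be as in the context. For every chordal sandwich $G'$ of $({\rm int^*}({\cal Q}_I),{\rm forb}({\cal Q}_I))$ there is a truth assignment $\sigma$ such that $\sigma$ is a satisfying assignment for $I$ and $G_\sigma$ is a subgraph of $G'$.
   Context: Instance: $I$ has variables $v_1,\ldots,v_n$ and clauses ${\cal C}_1,\ldots,{\cal C}_m$; each clause is an ordered triple of literals ${\cal C}_j=X\vee Y\vee Z$ with no variable occurring twice in a clause. Literals are $v_i$ or $\overline{v_i}$; $\overline W$ is the negation of $W$. A truth assignment $\sigma$ extends to literals via $\sigma(\overline{v_i})=1-\sigma(v_i)$; it is satisfying if in each clause exactly one literal has value 1. $\Delta_i$ is the set of $j$ such that $v_i$ or $\overline{v_i}$ occurs in ${\cal C}_j$. Ground set ${\cal X}_I$: $\alpha_{v_i},\alpha_{\overline{v_i}}$; $\beta^j_{v_i},\beta^j_{\overline{v_i}}$ ($j\in\Delta_i$); $\gamma^j_1,\gamma^j_2,\gamma^j_3,\lambda^j$ ($1\le j\le m$); $\delta,\mu$. Sets: $B=\{\mu,\delta\}$, $H_{v_i}=\{\alpha_{v_i},\delta\}$, $H_{\overline{v_i}}=\{\alpha_{\overline{v_i}},\delta\}$, $A_i=\{\alpha_{v_i},\alpha_{\overline{v_i}}\}$, $S^j_{v_i}=\{\alpha_{v_i},\beta^j_{v_i}\}$, $S^j_{\overline{v_i}}=\{\alpha_{\overline{v_i}},\beta^j_{\overline{v_i}}\}$ ($j\in\Delta_i$); for ${\cal C}_j=X\vee Y\vee Z$: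 $K^j_{\overline X}=\{\beta^j_X,\gamma^j_1\}$, $K^j_{\overline Y}=\{\beta^j_Y,\gamma^j_2\}$, $K^j_{\overline Z}=\{\beta^j_Z,\gamma^j_3\}$, $K^j_X=\{\beta^j_{\overline X},\lambda^j\}$, $K^j_Y=\{\beta^j_{\overline Y},\lambda^j\}$, $K^j_Z=\{\beta^j_{\overline Z},\lambda^j\}$, $L^j_X=\{\beta^j_{\overline X},\gamma^j_2\}$, $L^j_Y=\{\beta^j_{\overline Y},\gamma^j_3\}$, $L^j_Z=\{\beta^j_{\overline Z},\gamma^j_1\}$, $D^j_p=\{\gamma^j_p,\lambda^j\}$, $F^j=\{\lambda^j,\mu\}$. Objects indexed by a literal mean the one for that literal. ${\cal Q}_I$ is the collection of partial splits: $A_i|B$; $D^j_p|B$ ($p=1,2,3$); $S^j_{v_i}|S^{j'}_{\overline{v_i}}$ ($j,j'\in\Delta_i$); $S^j_{v_i}|K^{j'}_{\overline{v_i}}$, $S^j_{\overline{v_i}}|K^{j'}_{v_i}$ ($j<j'$ in $\Delta_i$); $K^j_{\overline{v_i}}|F^{j'}$, $K^j_{v_i}|F^{j'}$ ($j\in\Delta_i$, $j<j'\le m$); $H_{v_{i'}}|S^j_{v_i}$, $H_{\overline{v_{i'}}}|S^j_{v_i}$, $H_{v_{i'}}|S^j_{\overline{v_i}}$, $H_{\overline{v_{i'}}}|S^j_{\overline{v_i}}$ ($1\le i'<i\le n$, $j\in\Delta_i$); $H_{\overline{v_i}}|F^j$, $H_{v_i}|F^j$ (all $i,j$); for each ${\cal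 C}_j=X\vee Y\vee Z$: $K^j_{\overline X}|K^j_X$, $K^j_{\overline Y}|K^j_Y$, $K^j_{\overline Z}|K^j_Z$, $K^j_{\overline X}|L^j_X$, $K^j_{\overline Y}|L^j_Y$, $K^j_{\overline Z}|L^j_Z$, $S^j_Y|K^j_X$, $S^j_Z|K^j_Y$, $S^j_X|K^j_Z$, $S^j_Z|L^j_X$, $S^j_X|L^j_Y$, $S^j_Y|L^j_Z$. ${\rm int^*}({\cal Q}_I)$: vertices are the 2-sets occurring as cells of members of ${\cal Q}_I$, adjacent iff they intersect. ${\rm forb}({\cal Q}_I)$: same vertices, $P,P'$ adjacent iff $P|P'\in{\cal Q}_I$. A chordal sandwich of $(G_1,G_2)$ (edge-disjoint, same vertex set) is a chordal graph (no induced cycle of length $\ge4$) on that vertex set containing all edges of $G_1$ and none of $G_2$. For a truth assignment $\sigma$: the vertices $S^j_W$ are shoulders, the vertices $K^j_W$, $L^j_W$ are knees; a shoulder or knee indexed by literal $W$ is true if $\sigma(W)=1$. $G_\sigma$ is the graph obtained from ${\rm int^*}({\cal Q}_I)$ by making $B$ adjacent to all true knees and all true shoulders. *)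

From HB Require Import structures.
From mathcomp Require Import all_boot.
From mathcomp Require Import finmap.

Set Implicit Arguments.
Unset Strict Implicit.
Unset Printing Implicit Defensive.

Local Open Scope fset_scope.

(* Literals: (i, true) is v_i, (i, false) is the negation of v_i.
   Variables are indexed 0..n-1, clauses 0..m-1 (order-preserving shift
   of the paper's 1-based indices). *)
Definition lit := (nat * bool)%type.
Definition lneg (l : lit) : lit := (l.1, ~~ l.2).
Definition lvar (l : lit) : nat := l.1.

Definition clause := (lit * lit * lit)%type.
Definition cX (c : clause) : lit := c.1.1.
Definition cY (c : clause) : lit := c.1.2.
Definition cZ (c : clause) : lit := c.2.

Definition wf_instance (n : nat) (cls : seq clause) : Prop :=
  forall c, c \in cls ->
    [/\ lvar (cX c) < n, lvar (cY c) < n & lvar (cZ c) < n] /\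
    [/\ lvar (cX c) != lvar (cY c), lvar (cX c) != lvar (cZ c)
      & lvar (cY c) != lvar (cZ c)].

Definition default_clause : clause := ((0, true), (0, true), (0, true)).
Definition clause_at (cls : seq clause) (j : nat) : clause :=
  nth default_clause cls j.

Definition inDelta (cls : seq clause) (i j : nat) : bool :=
  (j < size cls) &&
  let c := clause_at cls j in
  [|| lvar (cX c) == i, lvar (cY c) == i | lvar (cZ c) == i].

Inductive atom :=
| Alpha of lit
| Beta of nat & lit
| Gamma of nat & nat         (* gamma^j_p, p = 1,2,3 *)
| Lam of nat
| Delta
| Mu.

Definition atom_enc (a : atom) : nat * nat * nat * bool :=
  match a with
  | Alpha l => (0, 0, l.1, l.2)
  | Beta j l => (1, j, l.1, l.2)
  | Gamma j p => (2, j, p, false)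
  | Lam j => (3, j, 0, false)
  | Delta => (4, 0, 0, false)
  | Mu => (5, 0, 0, false)
  end.

Definition atom_dec (x : nat * nat * nat * bool) : option atom :=
  match x with
  | (0, _, i, b) => Some (Alpha (i, b))
  | (1, j, i, b) => Some (Beta j (i, b))
  | (2, j, p, _) => Some (Gamma j p)
  | (3, j, _, _) => Some (Lam j)
  | (4, _, _, _) => Some Delta
  | (5, _, _, _) => Some Mu
  | _ => None
  end.

Lemma atom_encK : pcancel atom_enc atom_dec.
Proof. by case=> // [[]|? []]. Qed.

HB.instance Definition _ := Countable.copy atom (pcan_type atom_encK).

Definition vtx := {fset atom}.

Definition Bset : vtx := [fset Mu; Delta].
Definition Hset (W : lit) : vtx := [fset Alpha W; Delta].
Definition Aset (i : nat) : vtx := [fset Alpha (i, true); Alpha (i, false)].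
Definition Sset (j : nat) (W : lit) : vtx := [fset Alpha W; Beta j W].
Definition Kset (cls : seq clause) (j : nat) (W : lit) : vtx :=
  let c := clause_at cls j in
  [fset Beta j (lneg W);
        if [|| W == cX c, W == cY c | W == cZ c] then Lam j
        else if lneg W == cX c then Gamma j 1
        else if lneg W == cY c then Gamma j 2
        else Gamma j 3].
Definition LXset (cls : seq clause) (j : nat) : vtx :=
  [fset Beta j (lneg (cX (clause_at cls j))); Gamma j 2].
Definition LYset (cls : seq clause) (j : nat) : vtx :=
  [fset Beta j (lneg (cY (clause_at cls j))); Gamma j 3].
Definition LZset (cls : seq clause) (j : nat) : vtx :=
  [fset Beta j (lneg (cZ (clause_at cls j))); Gamma j 1].
Definition Dset (j p : nat) : vtx := [fset Gamma j p; Lam j].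
Definition Fset (j : nat) : vtx := [fset Lam j; Mu].

Definition pos (i : nat) : lit := (i, true).
Definition ng (i : nat) : lit := (i, false).

(* The collection Q_I of partial splits, as a predicate on ordered pairs
   (P, P') meaning the split P|P'. *)
Definition Qsplit (n : nat) (cls : seq clause) (P P' : vtx) : Prop :=
  let m := size cls in
  (exists i, i < n /\ P = Aset i /\ P' = Bset) \/
  (exists j p, j < m /\ 1 <= p <= 3 /\ P = Dset j p /\ P' = Bset) \/
  (exists i j j', i < n /\ inDelta cls i j /\ inDelta cls i j' /\
     P = Sset j (pos i) /\ P' = Sset j' (ng i)) \/
  (exists i j j', i < n /\ inDelta cls i j /\ inDelta cls i j' /\ j < j' /\
     ((P = Sset j (pos i) /\ P' = Kset cls j' (ng i)) \/
      (P = Sset j (ng i) /\ P' = Kset cls j' (pos i)))) \/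
  (exists i j j', i < n /\ inDelta cls i j /\ j < j' /\ j' < m /\
     ((P = Kset cls j (ng i) \/ P = Kset cls j (pos i)) /\ P' = Fset j')) \/
  (exists i' i j, i' < i /\ i < n /\ inDelta cls i j /\
     (P = Hset (pos i') \/ P = Hset (ng i')) /\
     (P' = Sset j (pos i) \/ P' = Sset j (ng i))) \/
  (exists i j, i < n /\ j < m /\
     (P = Hset (ng i) \/ P = Hset (pos i)) /\ P' = Fset j) \/
  (exists j, j < m /\
     let c := clause_at cls j in
     let X := cX c in let Y := cY c in let Z := cZ c in
     ((P = Kset cls j (lneg X) /\ P' = Kset cls j X) \/
      (P = Kset cls j (lneg Y) /\ P' = Kset cls j Y) \/
      (P = Kset cls j (lneg Z) /\ P' = Kset cls j Z) \/
      (P = Kset cls j (lneg X) /\ P' = LXset cls j) \/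
      (P = Kset cls j (lneg Y) /\ P' = LYset cls j) \/
      (P = Kset cls j (lneg Z) /\ P' = LZset cls j) \/
      (P = Sset j Y /\ P' = Kset cls j X) \/
      (P = Sset j Z /\ P' = Kset cls j Y) \/
      (P = Sset j X /\ P' = Kset cls j Z) \/
      (P = Sset j Z /\ P' = LXset cls j) \/
      (P = Sset j X /\ P' = LYset cls j) \/
      (P = Sset j Y /\ P' = LZset cls j))).

Definition Qvertex (n : nat) (cls : seq clause) (P : vtx) : Prop :=
  exists P', Qsplit n cls P P' \/ Qsplit n cls P' P.

Definition int_star (n : nat) (cls : seq clause) (P P' : vtx) : Prop :=
  [/\ Qvertex n cls P, Qvertex n cls P', P != P' &
      exists x, x \in P /\ x \in P'].

Definition forb (n : nat) (cls : seq clause) (P P' : vtx) : Prop :=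
  Qsplit n cls P P' \/ Qsplit n cls P' P.

Definition is_graph_on (V : vtx -> Prop) (E : vtx -> vtx -> Prop) : Prop :=
  [/\ forall P P', E P P' -> V P /\ V P',
      forall P P', E P P' -> E P' P &
      forall P, ~ E P P].

(* Chordal: no induced cycle of length >= 4, i.e. every cycle
   v_0 v_1 ... v_{k-1} v_0 of k >= 4 distinct vertices has a chord
   (an edge between two cyclically non-consecutive vertices). *)
Definition chordal (E : vtx -> vtx -> Prop) : Prop :=
  forall s : seq vtx, uniq s -> 4 <= size s ->
    (forall i, i < size s -> E (nth fset0 s i) (nth fset0 s (i.+1 %% size s))) ->
    exists i j, [/\ i < j, j < size s, i.+1 != j,
                    ~~ ((i == 0) && (j == (size s).-1)) &
                    E (nth fset0 s i) (nth fset0 s j)].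

Definition chordal_sandwich (V : vtx -> Prop) (E1 E2 E : vtx -> vtx -> Prop)
  : Prop :=
  [/\ is_graph_on V E, chordal E,
      forall P P', E1 P P' -> E P P' &
      forall P P', E2 P P' -> ~ E P P'].

Definition lit_val (sigma : nat -> bool) (W : lit) : bool :=
  if W.2 then sigma W.1 else ~~ sigma W.1.

Definition satisfying (cls : seq clause) (sigma : nat -> bool) : Prop :=
  forall c, c \in cls ->
    (lit_val sigma (cX c) + lit_val sigma (cY c) + lit_val sigma (cZ c)
        = 1)%N.

Definition true_shoulder_or_knee (cls : seq clause) (sigma : nat -> bool)
  (P : vtx) : Prop :=
  (exists j W, inDelta cls (lvar W) j /\ lit_val sigma W /\
     (P = Sset j W \/ P = Kset cls j W)) \/
  (exists j, j < size cls /\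
     let c := clause_at cls j in
     [\/ lit_val sigma (cX c) /\ P = LXset cls j,
         lit_val sigma (cY c) /\ P = LYset cls j |
         lit_val sigma (cZ c) /\ P = LZset cls j]).

Definition G_sigma (n : nat) (cls : seq clause) (sigma : nat -> bool)
  (P P' : vtx) : Prop :=
  int_star n cls P P' \/
  (P = Bset /\ true_shoulder_or_knee cls sigma P') \/
  (P' = Bset /\ true_shoulder_or_knee cls sigma P).

From mathcomp Require Import all_boot finmap zify.
From Stdlib Require Import Classical ClassicalEpsilon.

(* In a chordal graph, a common neighbour w of two nonadjacent vertices u, v is
   adjacent to an inner vertex of every u-v walk avoiding w: otherwise a shortest
   such walk closes up with w into a chordless cycle.  In the sandwich G' the vertex
   B = {mu, delta} sees every H_W and every F^j, whereas H|F, B|A_i and B|D^j_p are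
   forbidden splits.  Applied to the short walks of the gadgets this forces B to see,
   for every occurrence of a literal, its shoulder or the knee of its negation, but
   never both knees of a variable nor shoulders of both signs.  With sigma(v_i) true
   iff B sees some shoulder S^j_{v_i}, B therefore sees exactly the true shoulders,
   knees and L's; the splits S|K forbid two true literals in a clause, and the splits
   around K^j_{~X}, K^j_{~Y}, K^j_{~Z} forbid three false ones. *)

(** * Common neighbours in chordal graphs *)

Section ChordalSeparator.
Variable E : vtx -> vtx -> Prop.
Hypothesis Esym : forall P Q, E P Q -> E Q P.
Hypothesis Eirr : forall P, ~ E P P.
Hypothesis Echordal : chordal E.

Definition walk (q : seq vtx) : Prop :=
  forall k, k.+1 < size q -> E (nth fset0 q k) (nth fset0 q k.+1).

Lemma walk1 x : walk [:: x].
Proof. by case. Qed.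

Lemma walk_cons x y s : E x y -> walk (y :: s) -> walk (x :: y :: s).
Proof. by move=> Exy ws [|k] //= hk; apply: ws. Qed.

Lemma walk_shortcut q a b : a <= b -> b < size q -> walk q ->
  (0 < a -> E (nth fset0 q a.-1) (nth fset0 q b)) ->
  let q' := take a q ++ drop b q in
  [/\ walk q', size q' = a + (size q - b), {subset q' <= q},
      nth fset0 q' 0 = nth fset0 q (if 0 < a then 0 else b)
    & nth fset0 q' (size q').-1 = nth fset0 q (size q).-1].
Proof.
move=> ab bq wq junc q'.
have ta : minn a (size q) = a by apply/minn_idPl; lia.
have sq' : size q' = a + (size q - b) by rewrite size_cat size_take_min size_drop ta.
have nthq' k : nth fset0 q' k = if k < a then nth fset0 q k else nth fset0 q (b + (k - a)).
  by rewrite nth_cat size_take_min ta; case: ifP => ka; rewrite ?nth_take ?nth_drop.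
split=> //.
- move=> k; rewrite sq' !nthq' => hk.
  case: (ltnP k.+1 a) => h1; first by rewrite (ltnW h1); apply: wq; lia.
  case: (ltnP k a) => h2.
    have -> : k = a.-1 by lia.
    by rewrite prednK ?ltnn ?subnn ?addn0; [apply: junc|]; lia.
  have -> : b + (k.+1 - a) = (b + (k - a)).+1 by lia.
  by apply: wq; lia.
- by move=> x; rewrite mem_cat => /orP [/mem_take|/mem_drop].
- by rewrite nthq'; case: (posnP a) => [->|]; rewrite ?addn0.
by rewrite sq' nthq' ifN; [congr nth|]; lia.
Qed.

Lemma walk_cycle w q : walk q -> 0 < size q ->
  E w (nth fset0 q 0) -> E w (nth fset0 q (size q).-1) ->
  forall i, i < size (w :: q) ->
    E (nth fset0 (w :: q) i) (nth fset0 (w :: q) (i.+1 %% size (w :: q))).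
Proof.
move=> wq q0 Ewu Ewv [|i] /= hi; first by rewrite modn_small //; lia.
case: (ltnP i.+1 (size q)) => h; first by rewrite modn_small /=; [apply: wq|]; lia.
have -> : i.+2 = (size q).+1 by lia.
have -> : i = (size q).-1 by lia.
by rewrite modnn; apply: Esym.
Qed.

Lemma chordal_walk_inner_nbr (w u v : vtx) (q : seq vtx) :
  walk q -> 1 < size q -> w \notin q ->
  nth fset0 q 0 = u -> nth fset0 q (size q).-1 = v ->
  E w u -> E w v -> ~ E u v -> u != v ->
  exists2 x, x \in q & [/\ x != u, x != v & E w x].
Proof.
have [k] := ubnP (size q); elim: k q => // k IH q /ltnSE sq wq s1 wnq qu qv Ewu Ewv nuv uv.
have shortcut a b : a <= b -> b < size q ->
    (0 < a -> E (nth fset0 q a.-1) (nth fset0 q b)) -> (a = 0 -> nth fset0 q b = u) ->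
    a + (size q - b) < size q -> 1 < a + (size q - b) ->
    exists2 x, x \in q & [/\ x != u, x != v & E w x].
  move=> ab bq junc a0 small big.
  have [wq' sq' sub q'u q'v] := @walk_shortcut q a b ab bq wq junc.
  have q'u' : nth fset0 (take a q ++ drop b q) 0 = u.
    by rewrite q'u; case: (posnP a) a0 => [-> ->|].
  have wnq' : w \notin take a q ++ drop b q by apply: contra wnq => /sub.
  have [||x /sub xq hx] := IH _ _ wq' _ wnq' q'u' (etrans q'v qv) Ewu Ewv nuv uv;
    rewrite ?sq'; try lia.
  by exists x.
have [uq|/(uniqPn fset0) dup] := boolP (uniq q); last first.
  have [a [b [ab bq qab]]] :
      exists a b, [/\ a < b, b < size q & nth fset0 q a = nth fset0 q b].
    by have [a [b [? ? ?]]] := dup; exists a, b.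
  apply: (shortcut a b); rewrite -?qab; try lia.
  - by move=> ap; have := wq a.-1; rewrite prednK //; apply; lia.
  - by move=> a0; rewrite -qu -a0.
  case: (ltnP 1 (a + (size q - b))) => // h.
  have bl : b = (size q).-1 by lia.
  have a0 : a = 0 by lia.
  by move: uv; rewrite -qu -qv -bl -qab a0 eqxx.
case: (ltnP 2 (size q)) => s2; last first.
  have s2' : (size q).-1 = 1 by lia.
  by case: nuv; rewrite -qu -qv s2'; apply: wq; lia.
have cyc_uniq : uniq (w :: q) by rewrite /= wnq uq.
have cyc_size : 4 <= size (w :: q) by rewrite /=; lia.
have Ewq0 : E w (nth fset0 q 0) by rewrite qu.
have Ewql : E w (nth fset0 q (size q).-1) by rewrite qv.
have cyc_edges := @walk_cycle w q wq (ltnW s1) Ewq0 Ewql.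
have [[|i] [[|j] [ij js ij1 nend]]] := Echordal (w :: q) cyc_uniq cyc_size cyc_edges;
  rewrite //= in js ij1 nend *.
  move=> Ewj; exists (nth fset0 q j); first by apply: mem_nth.
  have q0 : 0 < size q by lia.
  have lastq : (size q).-1 < size q by lia.
  by split=> //; rewrite -?qu -?qv nth_uniq //; lia.
by move=> Eij; apply: (shortcut i.+1 j) => //; lia.
Qed.

Lemma chordal_nbr_on_walk (w u v : vtx) (mid : seq vtx) :
  E w u -> E w v -> ~ E u v -> u != v ->
  walk (u :: mid ++ [:: v]) -> w \notin mid -> exists2 x, x \in mid & E w x.
Proof.
move=> Ewu Ewv nuv uv wk wmid.
have wu : w != u by apply/eqP => wu; apply: (Eirr u); rewrite -{1}wu.
have wv : w != v by apply/eqP => wv; apply: (Eirr v); rewrite -{1}wv.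
have hl : nth fset0 (u :: mid ++ [:: v]) (size (u :: mid ++ [:: v])).-1 = v.
  by rewrite nth_last /= last_cat.
have [||x] := @chordal_walk_inner_nbr w u v _ wk _ _ erefl hl Ewu Ewv nuv uv.
- by rewrite /= size_cat /= addn1.
- by rewrite inE mem_cat inE !negb_or wu wv wmid.
rewrite inE mem_cat inE => /or3P [/eqP-> []|xm [_ _ Ewx]|/eqP-> []].
- by rewrite eqxx.
- by exists x.
- by rewrite eqxx.
Qed.

End ChordalSeparator.

(** * Clause gadgets *)

Local Open Scope fset_scope.

Lemma atom_eqE (a b : atom) : (a == b) = (atom_enc a == atom_enc b).
Proof. by apply/eqP/eqP => [->|/(pcan_inj atom_encK)]. Qed.

Lemma fset_neq_by (a : atom) (P Q : vtx) : a \in P -> a \notin Q -> P != Q.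
Proof. by move=> aP; apply: contraNneq => <-. Qed.

(* Positions 1, 2, 3 stand for X, Y, Z (other values behave like 3).  The gadget
   of a clause is invariant under the rotation p |-> next3 p of positions together
   with the indices of the gammas, so each gadget lemma is proved once for an
   arbitrary position. *)
Definition clause_lit (c : clause) (p : nat) : lit :=
  match p with 1 => cX c | 2 => cY c | _ => cZ c end.

Definition Lset (cls : seq clause) (j p : nat) : vtx :=
  match p with 1 => LXset cls j | 2 => LYset cls j | _ => LZset cls j end.

Definition next3 (p : nat) : nat := match p with 1 => 2 | 2 => 3 | _ => 1 end.

Lemma next3_range p : 1 <= next3 p <= 3.
Proof. by case: p => [|[|[|]]]. Qed.

Lemma pos3P {p} : 1 <= p <= 3 -> [\/ p = 1, p = 2 | p = 3].
Proof. by case: p => [|[|[|[|]]]]; constructor. Qed.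

Lemma lnegK : involutive lneg.
Proof. by case=> i b; rewrite /lneg negbK. Qed.

Lemma lit_val_neg sigma W : lit_val sigma (lneg W) = ~~ lit_val sigma W.
Proof. by case: W => i []; rewrite /lit_val /= ?negbK. Qed.

Lemma lit_same_var {V W : lit} : lvar V = lvar W -> V = W \/ V = lneg W.
Proof. by case: V W => i a [k b] /= ->; case: a; case: b; auto. Qed.

Lemma lvar_lneg W : lvar (lneg W) = lvar W.
Proof. by []. Qed.

Lemma exactly_one_of_three (b1 b2 b3 : bool) :
  ~~ (b1 && b2) -> ~~ (b2 && b3) -> ~~ (b3 && b1) -> b1 || b2 || b3 -> (b1 + b2 + b3 = 1)%N.
Proof. by case: b1; case: b2; case: b3. Qed.

Lemma eqbNF (b : bool) : (b == ~~ b) = false. Proof. by case: b. Qed.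
Lemma eqNbF (b : bool) : (~~ b == b) = false. Proof. by case: b. Qed.

Section Reduction.
Variables (n : nat) (cls : seq clause).
Hypothesis wf : wf_instance n cls.

Local Notation clit j p := (clause_lit (clause_at cls j) p).
Local Notation Qv := (Qvertex n cls).

Let wf_at {j} (hj : j < size cls) := @wf (clause_at cls j) (mem_nth default_clause hj).

Lemma clause_lit_var_lt j p : j < size cls -> lvar (clit j p) < n.
Proof.
by move=> hj; have [[? ? ?] _] := wf_at hj; case: p => [|[|[|]]].
Qed.

Lemma clause_lit_var_neq j p q : j < size cls -> 1 <= p <= 3 -> 1 <= q <= 3 -> p != q ->
  lvar (clit j p) != lvar (clit j q).
Proof.
move=> hj /pos3P hp /pos3P hq pq; have [_ [xy xz yz]] := wf_at hj.
by case: hp hq pq => -> [] -> //= _; rewrite // eq_sym.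
Qed.

Lemma inDelta_clause_lit j p : j < size cls -> inDelta cls (lvar (clit j p)) j.
Proof. by move=> hj; rewrite /inDelta hj; case: p => [|[|[|p]]] /=; rewrite eqxx ?orbT. Qed.

Lemma inDelta_var_lt {i j} : inDelta cls i j -> i < n.
Proof.
case/andP=> hj; have [[? ? ?] _] := wf_at hj.
by case/or3P => /eqP <-.
Qed.

Lemma inDelta_clause_litP {i j} : inDelta cls i j ->
  exists2 p, 1 <= p <= 3 & lvar (clit j p) = i.
Proof. by case/andP=> _ /or3P [] /eqP <-; [exists 1|exists 2|exists 3]. Qed.

Section Shapes.
Variables (j p : nat).
Hypotheses (hj : j < size cls) (hp : 1 <= p <= 3).

Let clause_shape : exists x y z ax ay az,
  clause_at cls j = ((x, ax), (y, ay), (z, az)) /\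
  [/\ (x == y) = false, (x == z) = false & (y == z) = false].
Proof.
have [_ [xy xz yz]] := wf_at hj.
move: xy xz yz; case: (clause_at cls j) => [[[x ax] [y ay]] [z az]] /= xy xz yz.
by exists x, y, z, ax, ay, az; split=> //; split; apply/negbTE.
Qed.

Let shapes :
  [/\ Kset cls j (clit j p) = [fset Beta j (lneg (clit j p)); Lam j],
      Kset cls j (lneg (clit j p)) = [fset Beta j (clit j p); Gamma j p]
    & Lset cls j p = [fset Beta j (lneg (clit j p)); Gamma j (next3 p)]].
Proof.
have [x [y [z [ax [ay [az [hc [xy xz yz]]]]]]]] := clause_shape.
have yx : (y == x) = false by rewrite eq_sym.
have zx : (z == x) = false by rewrite eq_sym.
have zy : (z == y) = false by rewrite eq_sym.
rewrite /Kset /Lset /LXset /LYset /LZset /clause_lit hc /cX /cY /cZ /lneg.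
by case: (pos3P hp) => ->;
  rewrite /= ?xpair_eqE ?eqxx ?xy ?xz ?yz ?yx ?zx ?zy ?eqbNF ?eqNbF ?negbK /= ?eqxx ?eqbNF ?eqNbF.
Qed.

Lemma Kset_clause_lit :
  Kset cls j (clit j p) = [fset Beta j (lneg (clit j p)); Lam j].
Proof. by case: shapes. Qed.

Lemma Kset_neg_clause_lit :
  Kset cls j (lneg (clit j p)) = [fset Beta j (clit j p); Gamma j p].
Proof. by case: shapes. Qed.

Lemma Lset_clause_lit :
  Lset cls j p = [fset Beta j (lneg (clit j p)); Gamma j (next3 p)].
Proof. by case: shapes. Qed.

End Shapes.

Lemma Kset_clause_lit_neq j p q : j < size cls -> 1 <= p <= 3 -> 1 <= q <= 3 -> p != q ->
  Kset cls j (clit j p) != Kset cls j (clit j q).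
Proof.
move=> hj hp hq pq; rewrite !Kset_clause_lit //.
apply: (@fset_neq_by (Beta j (lneg (clit j p)))); first by rewrite !inE eqxx.
rewrite !inE negb_or [_ == Lam _]atom_eqE andbT; apply/eqP => -[] /eqP var_eq _.
by move: var_eq; apply/negP; apply: clause_lit_var_neq.
Qed.

Lemma Kset_neg_Lset_neq j p q : j < size cls -> 1 <= p <= 3 -> next3 p = q ->
  Kset cls j (lneg (clit j q)) != Lset cls j p.
Proof.
move=> hj hp pq; rewrite Kset_neg_clause_lit -?pq ?next3_range // Lset_clause_lit //.
apply: (@fset_neq_by (Beta j (clit j (next3 p)))); first by rewrite !inE eqxx.
rewrite !inE negb_or [_ == Gamma _ _]atom_eqE /= andbT.
apply/eqP => -[] /(congr1 lvar) /eqP; apply/negP; apply: clause_lit_var_neq => //; first exact: next3_range.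
by case/pos3P: hp => ->.
Qed.

Variable E : vtx -> vtx -> Prop.
Hypothesis sandwich :
  chordal_sandwich (Qvertex n cls) (int_star n cls) (forb n cls) E.

Let Esym {P Q} : E P Q -> E Q P. Proof. by case: sandwich => [[_ + _] _ _ _]; apply. Qed.
Let Eirr P : ~ E P P. Proof. by case: sandwich => [[_ _ +] _ _ _]. Qed.
Let Echordal : chordal E. Proof. by case: sandwich. Qed.
Let Eint {P Q} : int_star n cls P Q -> E P Q. Proof. by case: sandwich => _ _ + _; apply. Qed.
Let Eforb {P Q} : forb n cls P Q -> ~ E P Q. Proof. by case: sandwich => _ _ _; apply. Qed.

Let nbr_on_walk w u v mid := @chordal_nbr_on_walk E (@Esym) Eirr Echordal w u v mid.

Lemma Qsplit_vertex {P Q} : Qsplit n cls P Q -> Qv P /\ Qv Q.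
Proof. by move=> PQ; split; [exists Q; left | exists P; right]. Qed.

Lemma Qvertex_A i : i < n -> Qv (Aset i).
Proof. by move=> hi; exists Bset; left; left; exists i. Qed.

Lemma Qvertex_B j : j < size cls -> Qv Bset.
Proof.
move=> hj; exists (Aset (lvar (clit j 1))); right; left.
by exists (lvar (clit j 1)); rewrite clause_lit_var_lt.
Qed.

Lemma forb_H_F {V j} : lvar V < n -> j < size cls -> forb n cls (Hset V) (Fset j).
Proof.
move=> hi hj; left; do 6 right; left; exists (lvar V), j; do 3 split=> //.
by case: V {hi} => i []; [right|left].
Qed.

Lemma Qvertex_H V j : lvar V < n -> j < size cls -> Qv (Hset V).
Proof. by move=> hi hj; case: (forb_H_F hi hj) => /Qsplit_vertex []. Qed.

Lemma Qvertex_F j : j < size cls -> Qv (Fset j).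
Proof.
by move=> hj; case: (forb_H_F (clause_lit_var_lt j 1 hj) hj) => /Qsplit_vertex [].
Qed.

Lemma forb_S_S {V j j'} : inDelta cls (lvar V) j -> inDelta cls (lvar V) j' ->
  forb n cls (Sset j V) (Sset j' (lneg V)).
Proof.
case: V => i [] dj dj'; have hi := inDelta_var_lt dj.
  by left; right; right; left; exists i, j, j'.
by right; right; right; left; exists i, j', j.
Qed.

Lemma Qvertex_S V j : inDelta cls (lvar V) j -> Qv (Sset j V).
Proof. by move=> dj; case: (forb_S_S dj dj) => /Qsplit_vertex []. Qed.

Lemma forb_B_D {j p} : j < size cls -> 1 <= p <= 3 -> forb n cls Bset (Dset j p).
Proof. by move=> hj hp; right; right; left; exists j, p. Qed.

Lemma Qvertex_D j p : j < size cls -> 1 <= p <= 3 -> Qv (Dset j p).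
Proof. by move=> hj hp; case: (forb_B_D hj hp) => /Qsplit_vertex []. Qed.

Lemma forb_B_A {i} : i < n -> forb n cls Bset (Aset i).
Proof. by move=> hi; right; left; exists i. Qed.

Section Position.
Variables (j p : nat).
Hypotheses (hj : j < size cls) (hp : 1 <= p <= 3).

Lemma split_Kneg_K : Qsplit n cls (Kset cls j (lneg (clit j p))) (Kset cls j (clit j p)).
Proof.
do 7 right; exists j; split=> //=.
by case: (pos3P hp) => ->; [left|right; left|do 2 right; left].
Qed.

Lemma split_Kneg_L : Qsplit n cls (Kset cls j (lneg (clit j p))) (Lset cls j p).
Proof.
do 7 right; exists j; split=> //=.
by case: (pos3P hp) => ->; [do 3 right; left|do 4 right; left|do 5 right; left].
Qed.

Lemma split_S_K : Qsplit n cls (Sset j (clit j (next3 p))) (Kset cls j (clit j p)).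
Proof.
do 7 right; exists j; split=> //=.
by case: (pos3P hp) => ->; [do 6 right; left|do 7 right; left|do 8 right; left].
Qed.

Lemma Qvertex_K : Qv (Kset cls j (clit j p)).
Proof. by case: (Qsplit_vertex split_Kneg_K). Qed.

Lemma Qvertex_Kneg : Qv (Kset cls j (lneg (clit j p))).
Proof. by case: (Qsplit_vertex split_Kneg_K). Qed.

Lemma Qvertex_L : Qv (Lset cls j p).
Proof. by case: (Qsplit_vertex split_Kneg_L). Qed.

End Position.

(* Side conditions of [chordal_nbr_on_walk]: every vertex is a cell of some split,
   two cells sharing an atom are adjacent, and two cells differ when an atom lies in
   only one of them. *)
#[local] Hint Resolve next3_range clause_lit_var_lt inDelta_clause_lit inDelta_var_lt : core.

Ltac qv := lazymatch goal with
  | |- Qvertex _ _ (Kset _ _ (lneg _)) => eapply Qvertex_Kneg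
  | |- Qvertex _ _ (Kset _ _ _) => eapply Qvertex_K
  | |- Qvertex _ _ (Lset _ _ _) => eapply Qvertex_L
  | |- Qvertex _ _ (Sset _ _) => eapply Qvertex_S
  | |- Qvertex _ _ (Dset _ _) => eapply Qvertex_D
  | |- Qvertex _ _ (Hset _) => eapply Qvertex_H
  | |- Qvertex _ _ (Fset _) => eapply Qvertex_F
  | |- Qvertex _ _ (Aset _) => eapply Qvertex_A
  | |- Qvertex _ _ Bset => eapply Qvertex_B
  end; rewrite ?lvar_lneg; eauto.

Ltac unfold_sets := rewrite /Bset /Hset /Aset /Sset /Dset /Fset.
Ltac shapes := rewrite ?Kset_neg_clause_lit ?Kset_clause_lit ?Lset_clause_lit //.
Ltac fset_mem := rewrite !inE /= ?eqxx ?orbT.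
Ltac fset_nmem := rewrite !inE !atom_eqE /= ?xpair_eqE ?eqxx /= ?eqbNF ?eqNbF.

Ltac vtx_neq_by_atom := unfold_sets; shapes;
  match goal with |- is_true (?P != ?Q) => first
  [ match P with context [fset1 ?a] =>
      apply: (@fset_neq_by a); [by fset_mem | by fset_nmem] end
  | match Q with context [fset1 ?a] =>
      rewrite eq_sym; apply: (@fset_neq_by a); [by fset_mem | by fset_nmem] end ]
  end.

(* Two positive knees, and K_{~W_(next3 p)} and L_p, differ only because the
   variables of a clause are distinct. *)
Ltac vtx_neq := first
  [ lazymatch goal with
    | |- is_true (Kset _ _ (clause_lit _ _) != Kset _ _ (clause_lit _ _)) =>
        by apply: Kset_clause_lit_neq
    | |- is_true (Kset _ _ (lneg _) != Lset _ _ _) => by apply: Kset_neg_Lset_neq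
    | |- is_true (Lset _ _ _ != Kset _ _ (lneg _)) =>
        by rewrite eq_sym; apply: Kset_neg_Lset_neq
    end
  | vtx_neq_by_atom ].

Ltac edge := apply: Eint; split; [qv | qv | vtx_neq | unfold_sets; shapes;
  match goal with |- context [fset1 ?a] => exists a; split; by fset_mem end].

Ltac walk_edges := rewrite !cat_cons cat0s;
  repeat lazymatch goal with |- walk _ (_ :: _ :: _) => apply: walk_cons; first by edge end;
  exact: walk1.

Ltac notin_walk := rewrite !inE ?negb_or; repeat (apply/andP; split); vtx_neq.

Ltac sep_side := try lazymatch goal with
  | |- E _ _ => edge
  | |- is_true (_ != _) => vtx_neq
  | |- walk _ _ => walk_edges
  | |- is_true (_ \notin _) => notin_walk
  end.

Section Gadgets.
Variables (j p : nat).
Hypotheses (hj : j < size cls) (hp : 1 <= p <= 3).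

Lemma B_S_or_Kneg_lit :
  E Bset (Sset j (clit j p)) \/ E Bset (Kset cls j (lneg (clit j p))).
Proof.
have [||||||x] := nbr_on_walk Bset (Hset (clit j p)) (Fset j)
  [:: Sset j (clit j p); Kset cls j (lneg (clit j p)); Dset j p]; sep_side.
- exact: Eforb (forb_H_F (clause_lit_var_lt j p hj) hj).
by rewrite !inE => /or3P [] /eqP -> EBx; [left | right | case: (Eforb (forb_B_D hj hp))].
Qed.

Lemma B_S_neg_or_K_lit :
  E Bset (Sset j (lneg (clit j p))) \/ E Bset (Kset cls j (clit j p)).
Proof.
have [||||||x] := nbr_on_walk Bset (Hset (lneg (clit j p))) (Fset j)
  [:: Sset j (lneg (clit j p)); Kset cls j (clit j p)]; sep_side.
- exact: Eforb (forb_H_F (V := lneg (clit j p)) (clause_lit_var_lt j p hj) hj).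
by rewrite !inE => /orP [] /eqP -> EBx; [left | right].
Qed.

Lemma B_not_adj_K_Kneg_lit :
  E Bset (Kset cls j (clit j p)) -> E Bset (Kset cls j (lneg (clit j p))) -> False.
Proof.
move=> EBK EBKn.
have [||||x] := nbr_on_walk Bset (Kset cls j (lneg (clit j p))) (Kset cls j (clit j p))
  [:: Dset j p] EBKn EBK; sep_side.
- exact: Eforb (or_introl (split_Kneg_K _ _ hj hp)).
by rewrite !inE => /eqP -> /(Eforb (forb_B_D hj hp)).
Qed.

Lemma B_adj_Kneg_next :
  E Bset (Sset j (clit j (next3 p))) -> E Bset (Kset cls j (clit j p)) ->
  E Bset (Kset cls j (lneg (clit j (next3 p)))).
Proof.
move=> EBS EBK.
have [||||x] := nbr_on_walk Bset (Sset j (clit j (next3 p))) (Kset cls j (clit j p))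
  [:: Kset cls j (lneg (clit j (next3 p))); Dset j (next3 p)] EBS EBK; sep_side.
- exact: Eforb (or_introl (split_S_K _ _ hj hp)).
by rewrite !inE => /orP [] /eqP -> // /(Eforb (forb_B_D hj (next3_range p))).
Qed.

Lemma B_adj_L_of_not_adj_Sneg :
  ~ E Bset (Sset j (lneg (clit j p))) -> E Bset (Lset cls j p).
Proof.
move=> nEBS.
have [||||||x] := nbr_on_walk Bset (Hset (lneg (clit j p))) (Fset j)
  [:: Sset j (lneg (clit j p)); Lset cls j p; Dset j (next3 p)]; sep_side.
- exact: Eforb (forb_H_F (V := lneg (clit j p)) (clause_lit_var_lt j p hj) hj).
by rewrite !inE => /or3P [] /eqP -> // /(Eforb (forb_B_D hj (next3_range p))).
Qed.

End Gadgets.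

Section AllFalse.
Variable j : nat.
Hypothesis hj : j < size cls.

Local Notation Kn q := (Kset cls j (lneg (clit j q))).
Local Notation Kp q := (Kset cls j (clit j q)).
Local Notation L q := (Lset cls j q).

(* Through the D's, B forces the edges K_{~X}K_{~Y} and K_{~Y}K_{~Z}; walks through
   the L's and the positive knees then force K_{~Y} to see a forbidden partner. *)
Lemma B_not_adj_all_Kneg : E Bset (Kn 1) -> E Bset (Kn 2) -> E Bset (Kn 3) -> False.
Proof.
move=> EB1 EB2 EB3.
have nonKK q : 1 <= q <= 3 -> ~ E (Kn q) (Kp q).
  by move=> hq; apply: Eforb; left; apply: split_Kneg_K.
have nonKL q : 1 <= q <= 3 -> ~ E (Kn q) (L q).
  by move=> hq; apply: Eforb; left; apply: split_Kneg_L.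
have nonBD q : 1 <= q <= 3 -> ~ E Bset (Dset j q) by move=> hq; apply/Eforb/forb_B_D.
have E12 : E (Kn 1) (Kn 2).
  apply: NNPP => n12.
  have [|||x] := nbr_on_walk Bset (Kn 1) (Kn 2) [:: Dset j 1; Dset j 2] EB1 EB2 n12; sep_side.
  by rewrite !inE => /orP [] /eqP ->; apply: nonBD.
have E23 : E (Kn 2) (Kn 3).
  apply: NNPP => n23.
  have [|||x] := nbr_on_walk Bset (Kn 2) (Kn 3) [:: Dset j 2; Dset j 3] EB2 EB3 n23; sep_side.
  by rewrite !inE => /orP [] /eqP ->; apply: nonBD.
have n2K3 : ~ E (Kn 2) (Kp 3).
  move=> E2K3.
  have [|||x] := nbr_on_walk (Kn 2) (Kn 3) (Kp 3) [:: L 2; Kp 2] E23 E2K3 (nonKK 3 isT); sep_side.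
  by rewrite !inE => /orP [] /eqP ->; [apply: nonKL | apply: nonKK].
have n2L3 : ~ E (Kn 2) (L 3).
  move=> E2L3.
  have [|||x] := nbr_on_walk (Kn 2) (Kn 3) (L 3) [:: L 2; Kp 2; Kp 3] E23 E2L3 (nonKL 3 isT);
    sep_side.
  by rewrite !inE => /or3P [] /eqP ->; [apply: nonKL | apply: nonKK | exact: n2K3].
have E21 := Esym E12.
have n2K1 : ~ E (Kn 2) (Kp 1).
  move=> E2K1.
  have [|||x] := nbr_on_walk (Kn 2) (Kn 1) (Kp 1) [:: L 3; Kp 3] E21 E2K1 (nonKK 1 isT); sep_side.
  by rewrite !inE => /orP [] /eqP ->; [exact: n2L3 | exact: n2K3].
have E2L1 : E (Kn 2) (L 1) by edge.
have [|||x] := nbr_on_walk (Kn 2) (Kn 1) (L 1) [:: L 3; Kp 3; Kp 1] E21 E2L1 (nonKL 1 isT);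
  sep_side.
by rewrite !inE => /or3P [] /eqP ->; [exact: n2L3 | exact: n2K3 | exact: n2K1].
Qed.

End AllFalse.

(** * The assignment read off from the neighbourhood of B *)

Lemma B_S_or_Kneg {V j} : inDelta cls (lvar V) j ->
  E Bset (Sset j V) \/ E Bset (Kset cls j (lneg V)).
Proof.
move=> dV; have [p hp pV] := inDelta_clause_litP dV; have /andP [hj _] := dV.
case: (lit_same_var (esym pV)) => ->; first exact: B_S_or_Kneg_lit.
by rewrite lnegK; apply: B_S_neg_or_K_lit.
Qed.

Lemma B_not_adj_K_Kneg {V j} : inDelta cls (lvar V) j ->
  E Bset (Kset cls j V) -> E Bset (Kset cls j (lneg V)) -> False.
Proof.
move=> dV; have [p hp pV] := inDelta_clause_litP dV; have /andP [hj _] := dV.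
case: (lit_same_var (esym pV)) => ->; first exact: B_not_adj_K_Kneg_lit.
by rewrite lnegK => EBKn EBK; apply: (B_not_adj_K_Kneg_lit _ _ hj hp EBK EBKn).
Qed.

Lemma B_not_adj_S_Sneg {V j j'} : inDelta cls (lvar V) j -> inDelta cls (lvar V) j' ->
  E Bset (Sset j V) -> E Bset (Sset j' (lneg V)) -> False.
Proof.
move=> dj dj' EBS EBSn; have hi := inDelta_var_lt dj.
have [||||x] := nbr_on_walk Bset (Sset j V) (Sset j' (lneg V)) [:: Aset (lvar V)] EBS EBSn.
- exact: Eforb (forb_S_S dj dj').
- by case: V {dj dj' EBS EBSn hi} => i []; vtx_neq.
- by case: V {EBS EBSn} dj dj' hi => i [] dj dj' hi; walk_edges.
- by case: V {EBS EBSn} dj dj' hi => i [] dj dj' hi; notin_walk.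
by rewrite inE => /eqP -> /(Eforb (forb_B_A hi)).
Qed.

Lemma B_adj_S_K_of_not_adj_Sneg {V j} : inDelta cls (lvar V) j -> ~ E Bset (Sset j (lneg V)) ->
  [/\ E Bset (Sset j V), E Bset (Kset cls j V) & ~ E Bset (Kset cls j (lneg V))].
Proof.
move=> dV nEBSn.
have EBK : E Bset (Kset cls j V).
  by case: (B_S_or_Kneg (V := lneg V) dV) => //; rewrite lnegK.
have nEBKn : ~ E Bset (Kset cls j (lneg V)) by apply: B_not_adj_K_Kneg EBK.
by case: (B_S_or_Kneg dV).
Qed.

Definition shoulder_assignment (i : nat) : bool :=
  if excluded_middle_informative (exists j, inDelta cls i j /\ E Bset (Sset j (pos i)))
  then true else false.

Local Notation sigma := shoulder_assignment.

Lemma B_adj_S_K_iff_true {V j} : inDelta cls (lvar V) j ->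
  (E Bset (Sset j V) <-> lit_val sigma V) /\ (E Bset (Kset cls j V) <-> lit_val sigma V).
Proof.
move=> dV; set T : lit := (lvar V, sigma (lvar V)).
have nEBSn : ~ E Bset (Sset j (lneg T)).
  rewrite /T /sigma; case: excluded_middle_informative => [[j0 [dj0 EBS0]]|nEBS] EBS /=.
    exact: (B_not_adj_S_Sneg (V := pos (lvar V)) dj0 dV EBS0 EBS).
  by apply: (nEBS); exists j.
have [EBS EBK nEBKn] := B_adj_S_K_of_not_adj_Sneg (V := T) dV nEBSn.
have vT : lit_val sigma T by rewrite /lit_val /=; case: (sigma _).
case: (@lit_same_var V T erefl) => ->.
  by rewrite vT.
by rewrite lit_val_neg vT.
Qed.

Lemma clause_exactly_one_true j : j < size cls ->
  (lit_val sigma (clit j 1) + lit_val sigma (clit j 2) + lit_val sigma (clit j 3) = 1)%N.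
Proof.
move=> hj.
have iff_lit p := B_adj_S_K_iff_true (inDelta_clause_lit j p hj).
have iff_neg p := B_adj_S_K_iff_true (V := lneg (clit j p)) (inDelta_clause_lit j p hj).
have not_two p : 1 <= p <= 3 ->
    ~~ (lit_val sigma (clit j p) && lit_val sigma (clit j (next3 p))).
  move=> hp; apply/negP => /andP [vp vq].
  have EBS := (iff_lit (next3 p)).1.2 vq.
  have EBK := (iff_lit p).2.2 vp.
  have := (iff_neg (next3 p)).2.1 (B_adj_Kneg_next _ _ hj hp EBS EBK).
  by rewrite lit_val_neg vq.
have Kn q : ~~ lit_val sigma (clit j q) -> E Bset (Kset cls j (lneg (clit j q))).
  by move=> nq; apply/(iff_neg q).2; rewrite lit_val_neg.
apply: exactly_one_of_three; [exact: (not_two 1) | exact: (not_two 2) | exact: (not_two 3) |].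
apply/negPn/negP; rewrite !negb_or => /andP [/andP [n1 n2] n3].
exact: (B_not_adj_all_Kneg _ hj (Kn 1 n1) (Kn 2 n2) (Kn 3 n3)).
Qed.

Lemma shoulder_assignment_satisfying : satisfying cls sigma.
Proof.
move=> c cin; have hj : index c cls < size cls by rewrite index_mem.
have hc : clause_at cls (index c cls) = c by rewrite /clause_at nth_index.
by have := clause_exactly_one_true _ hj; rewrite hc.
Qed.

Lemma B_adj_true_shoulder_or_knee P : true_shoulder_or_knee cls sigma P -> E Bset P.
Proof.
case=> [[j [V [dV [vV [->|->]]]]] | [j [hj]]].
- exact/(B_adj_S_K_iff_true dV).1.
- exact/(B_adj_S_K_iff_true dV).2.
have EBL p : 1 <= p <= 3 -> lit_val sigma (clit j p) -> E Bset (Lset cls j p).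
  move=> hp vp; apply: (B_adj_L_of_not_adj_Sneg _ _ hj hp).
  move/(B_adj_S_K_iff_true (V := lneg _) (inDelta_clause_lit _ p hj)).1.
  by rewrite lit_val_neg vp.
by case=> [[+ ->]|[+ ->]|[+ ->]]; [exact: (EBL 1) | exact: (EBL 2) | exact: (EBL 3)].
Qed.

Lemma G_sigma_subgraph P Q : G_sigma n cls sigma P Q -> E P Q.
Proof.
case=> [/Eint //|[[-> /B_adj_true_shoulder_or_knee //]|[-> /B_adj_true_shoulder_or_knee]]].
exact: Esym.
Qed.

End Reduction.

Theorem lemma11 (n : nat) (cls : seq clause) :
  wf_instance n cls ->
  forall E : vtx -> vtx -> Prop,
    chordal_sandwich (Qvertex n cls) (int_star n cls) (forb n cls) E ->
    exists sigma : nat -> bool,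
      satisfying cls sigma /\
      (forall P P', G_sigma n cls sigma P P' -> E P P').
Proof.
move=> wf E sandwich; exists (shoulder_assignment cls E); split.
- exact: (shoulder_assignment_satisfying _ _ wf _ sandwich).
- exact: (G_sigma_subgraph _ _ wf _ sandwich).
Qed.
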